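(* Let $G$ be a connected finite simple graph with at least two vertices. Then its Cheeger constant satisfies $h(G)\geq \dfrac{1}{2(\tau(G)-1)}$.
   Context: $K=D-A$ is the Kirchhoff matrix of $G$ and $\tau(G)={\rm det}(1+K)/{\rm Det}(K)=\prod_{\lambda\neq0}(1+1/\lambda)$, the product over the non-zero eigenvalues of $K$ with multiplicity. The Cheeger constant is $h(G)=\min\{|E(S,V\setminus S)|/|S| : S\subset V,\ 0<|S|\leq |V|/2\}$, where $E(S,V\setminus S)$ is the set of edges with one endpoint in $S$ and one in $V\setminus S$. *)

From HB Require Import structures.
From mathcomp Require Import all_boot all_order all_algebra all_field.
Set Implicit Arguments. Unset Strict Implicit. Unset Printing Implicit Defensive.
Import Order.TTheory GRing.Theory Num.Theory.
Local Open Scope ring_scope.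

Definition simple_graph (n : nat) (e : rel 'I_n) : Prop :=
  symmetric e /\ irreflexive e.

Definition connected_graph (n : nat) (e : rel 'I_n) : Prop :=
  forall i j : 'I_n, connect e i j.

Definition adj_mx (n : nat) (e : rel 'I_n) : 'M[algC]_n :=
  \matrix_(i, j) (e i j)%:R.

Definition deg_mx (n : nat) (e : rel 'I_n) : 'M[algC]_n :=
  \matrix_(i, j) ((i == j)%:R * (#|[set k | e i k]|)%:R).

Definition kirchhoff (n : nat) (e : rel 'I_n) : 'M[algC]_n :=
  deg_mx e - adj_mx e.

(* The eigenvalues of a square matrix, listed with (algebraic) multiplicity:
   the roots of its (monic) characteristic polynomial. *)
Definition eigenvalues (n : nat) (M : 'M[algC]_n) : seq algC :=
  sval (closed_field_poly_normal (char_poly M)).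

Definition tau (n : nat) (e : rel 'I_n) : algC :=
  \prod_(l <- eigenvalues (kirchhoff e) | l != 0) (1 + l^-1).

(* Number of edges between S and its complement: each edge {u,v} with u in S,
   v not in S is counted once as the ordered pair (u,v). *)
Definition edge_boundary (n : nat) (e : rel 'I_n) (S : {set 'I_n}) : nat :=
  #|[set p : 'I_n * 'I_n | [&& p.1 \in S, p.2 \notin S & e p.1 p.2]]|.

(* Cheeger constant: minimum of |E(S, V\S)|/|S| over 0 < |S| <= |V|/2.
   The default value n%:Q is only returned when no admissible S exists
   (n <= 1); otherwise it is never the minimum since every ratio is < n. *)
Definition cheeger (n : nat) (e : rel 'I_n) : rat :=
  \big[Order.min/(n%:Q)]_(S : {set 'I_n} | (0 < #|S|)%N && (#|S| * 2 <= n)%N)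
     ((edge_boundary e S)%:Q / (#|S|)%:Q).

From HB Require Import structures.
From mathcomp Require Import all_boot all_order all_algebra all_field.
From mathcomp Require Import ring.
Set Implicit Arguments. Unset Strict Implicit. Unset Printing Implicit Defensive.
Import Order.TTheory GRing.Theory Num.Theory.
Local Open Scope ring_scope.
Local Open Scope sesquilinear_scope.

(* Let S be a vertex set with 0 < |S| <= n/2 and f = 1_S - |S|/n its centred
   indicator.  Its Dirichlet energy f K f^* is the edge boundary |E(S, V\S)|,
   its squared norm is |S|(n - |S|)/n >= |S|/2, and it is orthogonal to the
   kernel of K, which consists of the constant vectors since G is connected.
   Every non-zero eigenvalue l of K is positive with 1 + 1/l <= tau(G), i.e.
   1 <= l (tau(G) - 1), so expanding f in an orthonormal eigenbasis of K gives
   |f|^2 <= (tau(G) - 1) f K f^*, that is |S|/2 <= (tau(G) - 1) |E(S, V\S)|. *)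

Definition qform {C : numClosedFieldType} {n} (A : 'M[C]_n) (x : 'rV[C]_n) : C :=
  (x *m A *m x ^t*) 0 0.

Section HermitianForms.

Variable C : numClosedFieldType.

Lemma qformE n (A : 'M[C]_n) x :
  qform A x = \sum_j \sum_k x 0 j * A j k * (x 0 k)^*.
Proof.
rewrite /qform mxE exchange_big; apply: eq_bigr => k _.
by rewrite !mxE big_distrl.
Qed.

Lemma qform_conjmx m n (P : 'M[C]_(m, n)) (A : 'M[C]_n) x :
  qform (P *m A *m P ^t*) x = qform A (x *m P).
Proof. by rewrite /qform trmx_mul map_mxM !mulmxA. Qed.

Lemma qform_diag n (D x : 'rV[C]_n) :
  qform (diag_mx D) x = \sum_i D 0 i * `|x 0 i| ^+ 2.
Proof.
rewrite /qform mul_mx_diag mxE; apply: eq_bigr => i _.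
by rewrite !mxE normCK mulrAC mulrC.
Qed.

Lemma qform1 n (x : 'rV[C]_n) : qform 1%:M x = \sum_i `|x 0 i| ^+ 2.
Proof.
by rewrite -diag_const_mx qform_diag; apply: eq_bigr => i _; rewrite mxE mul1r.
Qed.

Lemma mulmx_trC_const_row m n (x : 'rV[C]_n) (P : 'M[C]_(m, n)) i k :
  (forall j, P i j = P i k) -> (x *m P ^t*) 0 i = (\sum_j x 0 j) * (P i k)^*.
Proof.
by move=> Pi_const; rewrite mxE big_distrl; apply: eq_bigr => j _; rewrite !mxE Pi_const.
Qed.

End HermitianForms.

Section Spectral.

Variables (C : numClosedFieldType) (n : nat) (A : 'M[C]_n).
Hypothesis A_normal : A \is normalmx.

Local Notation P := (spectralmx A).
Local Notation D := (spectral_diag A).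

Lemma spectral_decomposition : A = P ^t* *m diag_mx D *m P.
Proof.
by rewrite -invmx_unitary ?spectral_unitarymx //; apply/orthomx_spectralP.
Qed.

Lemma qform_spectral x : qform A x = \sum_i D 0 i * `|(x *m P ^t*) 0 i| ^+ 2.
Proof.
rewrite {1}spectral_decomposition -[X in _ *m X]trmxCK.
by rewrite qform_conjmx qform_diag.
Qed.

Lemma spectral_diag_qform i : D 0 i = qform A (row i P).
Proof.
have PPt : P *m P ^t* = 1%:M by apply/unitarymxP/spectral_unitarymx.
rewrite qform_spectral -row_mul PPt (bigD1 i) //= big1 => [|j ji].
  by rewrite !mxE eqxx normr1 expr1n mulr1 addr0.
by rewrite !mxE eq_sym (negPf ji) normr0 expr0n mulr0.
Qed.

Lemma qform_le_spectral (c : C) x :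
    (forall i, D 0 i != 0 -> 1 <= D 0 i * c) ->
    (forall i, D 0 i = 0 -> (x *m P ^t*) 0 i = 0) ->
  qform 1%:M x <= qform A x * c.
Proof.
move=> Dc ker_x.
have PtP : P ^t* *m 1%:M *m P ^t* ^t* = 1%:M.
  by rewrite mulmx1 trmxCK -invmx_unitary ?spectral_unitarymx ?mulVmx ?spectral_unit.
rewrite -PtP qform_conjmx qform1 qform_spectral mulr_suml.
apply: ler_sum => i _; have [Di0|Dn0] := eqVneq (D 0 i) 0.
  by rewrite ker_x // normr0 expr0n /= Di0 !mul0r.
by rewrite mulrAC -[leLHS]mul1r ler_wpM2r ?exprn_ge0 ?Dc.
Qed.

End Spectral.

Lemma char_poly_similar (R : comUnitRingType) n (A P : 'M[R]_n) :
  P \in unitmx -> char_poly (invmx P *m A *m P) = char_poly A.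
Proof.
move=> Pu; rewrite /char_poly /char_poly_mx.
have eX : ('X%:M : 'M[{poly R}]_n) = map_mx polyC (invmx P) *m 'X%:M *m map_mx polyC P.
  by rewrite mul_mx_scalar -scalemxAl -map_mxM mulVmx // map_mx1 scalemx1.
rewrite {1}eX !map_mxM -mulmxBl -mulmxBr !det_mulmx mulrC mulrA -det_mulmx.
by rewrite -map_mxM mulmxV // map_mx1 det1 mul1r.
Qed.

Lemma char_poly_eigenvalues n (A : 'M[algC]_n) :
  char_poly A = \prod_(z <- eigenvalues A) ('X - z%:P).
Proof.
have A_split : char_poly A = lead_coef (char_poly A) *:
    \prod_(z <- eigenvalues A) ('X - z%:P).
  exact: svalP (closed_field_poly_normal (char_poly A)).
by rewrite (monicP (char_poly_monic A)) scale1r in A_split.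
Qed.

Lemma perm_eigenvalues_spectral n (A : 'M[algC]_n) : A \is normalmx ->
  perm_eq (eigenvalues A) [seq spectral_diag A 0 i | i <- index_enum 'I_n].
Proof.
move=> /orthomx_spectralP A_spectral; apply: prod_XsubC_eq.
rewrite -char_poly_eigenvalues [in LHS]A_spectral char_poly_similar ?spectral_unit //.
rewrite char_poly_trig ?diag_mx_is_trig // big_map.
by apply: eq_bigr => i _; rewrite mxE eqxx mulr1n.
Qed.

Lemma prod1D_ge (R : numDomainType) (I : finType) (P : pred I) (x : I -> R) i :
  (forall j, P j -> 0 <= x j) -> P i -> 1 + x i <= \prod_(j | P j) (1 + x j).
Proof.
move=> x_ge0 Pi; rewrite (bigD1 i) //= -[leLHS]mulr1.
rewrite ler_wpM2l ?addr_ge0 ?x_ge0 //.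
apply: (big_ind (fun y => 1 <= y)) => [//|a b|j /andP[Pj _]].
  exact: mulr_ege1.
by rewrite lerDl x_ge0.
Qed.

Lemma natr_card_set (R : pzSemiRingType) (T : finType) (P : pred T) :
  #|[set x | P x]|%:R = \sum_x (P x)%:R :> R.
Proof.
rewrite -sum1_card natr_sum big_mkcond.
by apply: eq_bigr => x _; rewrite inE; case: (P x).
Qed.

Definition centered_indicator n (S : {set 'I_n}) : 'rV[algC]_n :=
  \row_j ((j \in S)%:R - #|S|%:R / n%:R).

Section CenteredIndicator.

Variables (n : nat) (S : {set 'I_n}).
Hypothesis n_gt0 : (0 < n)%N.

Local Notation s := (#|S|%:R : algC).
Local Notation nn := (n%:R : algC).

Let nn_neq0 : nn != 0. Proof. by rewrite pnatr_eq0 -lt0n. Qed.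

Lemma sum_indicator : \sum_j ((j \in S)%:R : algC) = s.
Proof.
by rewrite -sum1_card natr_sum [RHS]big_mkcond; apply: eq_bigr => j _; case: (j \in S).
Qed.

Lemma sum_centered_indicator : \sum_j centered_indicator S 0 j = 0.
Proof.
under eq_bigr => j _ do rewrite mxE.
by rewrite sumrB sum_indicator sumr_const card_ord -[X in _ - X]mulr_natr divfK ?subrr.
Qed.

Lemma qform1_centered_indicator : qform 1%:M (centered_indicator S) = s * (nn - s) / nn.
Proof.
rewrite qform1 (eq_bigr (fun j => (j \in S)%:R * (1 - 2 * (s / nn)) + (s / nn) ^+ 2)).
  rewrite big_split /= -big_distrl /= sum_indicator sumr_const card_ord.
  by rewrite -[X in _ + X]mulr_natr; field.
move=> j _; rewrite mxE normCK rmorphB fmorph_div /= !conjC_nat.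
by case: (j \in S); rewrite /=; ring.
Qed.

Lemma card_le_qform1_centered_indicator :
  (#|S| * 2 <= n)%N -> s <= 2 * qform 1%:M (centered_indicator S).
Proof.
move=> S_le; rewrite qform1_centered_indicator -subr_ge0.
have -> : 2 * (s * (nn - s) / nn) - s = s * (n - #|S| * 2)%N%:R / nn.
  by rewrite natrB // natrM; field.
by rewrite divr_ge0 ?mulr_ge0.
Qed.

End CenteredIndicator.

Section Laplacian.

Variables (n : nat) (e : rel 'I_n).
Hypothesis e_sym : symmetric e.
Hypothesis e_conn : connected_graph e.

Local Notation K := (kirchhoff e).

Lemma kirchhoff_normal : K \is normalmx.
Proof.
have KtK : K ^t* = K.
  apply/matrixP => i j; rewrite !mxE rmorphB rmorphM /= !conjC_nat eq_sym e_sym.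
  by case: (i =P j) => [->|]; rewrite ?mul0r.
by apply/normalmxP; rewrite KtK.
Qed.

Lemma qform_kirchhoff x :
  2 * qform K x = \sum_j \sum_k (e j k)%:R * `|x 0 j - x 0 k| ^+ 2.
Proof.
pose S1 := \sum_j \sum_k (e j k)%:R * (x 0 j * (x 0 j)^* - x 0 j * (x 0 k)^*).
have -> : qform K x = S1.
  rewrite qformE; apply: eq_bigr => j _.
  under eq_bigr => k _ do rewrite !mxE mulrBr mulrBl.
  rewrite sumrB (bigD1 j) //= eqxx mul1r big1 => [|k /negPf kj]; last first.
    by rewrite eq_sym kj mul0r mulr0 mul0r.
  rewrite addr0 natr_card_set mulr_sumr mulr_suml -sumrB.
  by apply: eq_bigr => k _; rewrite mulrBr; congr (_ - _); ring.
have -> : \sum_j \sum_k (e j k)%:R * `|x 0 j - x 0 k| ^+ 2 =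
    S1 + \sum_j \sum_k (e j k)%:R * (x 0 k * (x 0 k)^* - x 0 k * (x 0 j)^*).
  rewrite -big_split; apply: eq_bigr => j _.
  rewrite -big_split; apply: eq_bigr => k _.
  by rewrite normCK rmorphB /=; ring.
rewrite exchange_big /=.
under [X in _ = _ + X]eq_bigr => k _ do under eq_bigr => j _ do rewrite e_sym.
by rewrite mulr2n mulrDl mul1r.
Qed.

Lemma qform_kirchhoff_ge0 x : 0 <= qform K x.
Proof.
rewrite -(pmulr_rge0 _ (ltr0n _ 2)) qform_kirchhoff.
by do 2![apply: sumr_ge0 => ? _]; rewrite mulr_ge0 ?exprn_ge0.
Qed.

Lemma qform_kirchhoff_eq0 x : qform K x = 0 -> forall j k, x 0 j = x 0 k.
Proof.
move=> x0 j k.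
have x_edge a b : e a b -> x 0 a = x 0 b.
  move: x0 => /(congr1 ( *%R 2)); rewrite qform_kirchhoff mulr0.
  have term_ge0 c d : 0 <= (e c d)%:R * `|x 0 c - x 0 d| ^+ 2 :> algC.
    by rewrite mulr_ge0 ?exprn_ge0.
  move=> /(psumr_eq0P (fun c _ => sumr_ge0 _ (fun d _ => term_ge0 c d)))/(_ a isT).
  move=> /(psumr_eq0P (fun d _ => term_ge0 a d))/(_ b isT)/eqP.
  by move=> + eab; rewrite eab mul1r sqrf_eq0 normr_eq0 subr_eq0 => /eqP.
have x_closed : closed e [pred c | x 0 c == x 0 j].
  by move=> a b /x_edge; rewrite !inE => ->.
have := closed_connect x_closed (e_conn j k).
by rewrite !inE eqxx => /esym/eqP.
Qed.

Lemma qform_kirchhoff_indicator (S : {set 'I_n}) (a : algC) :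
  qform K (\row_j ((j \in S)%:R - a)) = (edge_boundary e S)%:R.
Proof.
apply: (@mulfI _ 2); first by rewrite pnatr_eq0.
pose B j k := (((j \in S) && (k \notin S) && e j k)%:R : algC).
have -> : (edge_boundary e S)%:R = \sum_j \sum_k B j k.
  rewrite /edge_boundary natr_card_set pair_bigA.
  by apply: eq_bigr => p _; rewrite /B andbA.
have term j k : (e j k)%:R * `|(\row_i ((i \in S)%:R - a)) 0 j -
    (\row_i ((i \in S)%:R - a)) 0 k| ^+ 2 = B j k + B k j.
  rewrite !mxE opprB addrA subrK /B (e_sym k j).
  by case: (j \in S); case: (k \in S); case: (e j k); rewrite /= ?(subrr, normr0,
    normrN, normr1, expr1n, expr0n, mul0r, mul1r, addr0, add0r, subr0, sub0r).
rewrite qform_kirchhoff (eq_bigr (fun j => \sum_k B j k + \sum_k B k j)) => [|j _].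
  by rewrite big_split /= [X in _ + X]exchange_big /= mulr2n mulrDl mul1r.
by rewrite -big_split; apply: eq_bigr => k _; apply: term.
Qed.

Local Notation P := (spectralmx K).
Local Notation D := (spectral_diag K).

Lemma spectral_kirchhoff_ge0 i : 0 <= D 0 i.
Proof. by rewrite (spectral_diag_qform kirchhoff_normal) qform_kirchhoff_ge0. Qed.

Lemma spectral_kirchhoff_le_tau i : D 0 i != 0 -> 1 <= D 0 i * (tau e - 1).
Proof.
move=> Dn0; have tauE : tau e = \prod_(j | D 0 j != 0) (1 + (D 0 j)^-1).
  by rewrite /tau (perm_big _ (perm_eigenvalues_spectral kirchhoff_normal)) big_map.
have : 1 + (D 0 i)^-1 <= tau e.
  rewrite tauE; apply: prod1D_ge => // j _.
  by rewrite invr_ge0 spectral_kirchhoff_ge0.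
rewrite -lerBrDl => Dinv_le.
by rewrite -[leLHS](divff Dn0) ler_wpM2l ?spectral_kirchhoff_ge0.
Qed.

Lemma spectral_kirchhoff_kernel i : D 0 i = 0 -> forall j k, P i j = P i k.
Proof.
move=> Di0 j k; have := @qform_kirchhoff_eq0 (row i P) _ j k.
by rewrite !mxE; apply; rewrite -(spectral_diag_qform kirchhoff_normal).
Qed.

Lemma card_le_edge_boundary_tau (S : {set 'I_n}) :
    (0 < #|S|)%N -> (#|S| * 2 <= n)%N ->
  #|S|%:R <= 2 * (edge_boundary e S)%:R * (tau e - 1).
Proof.
move=> /card_gt0P[k _] S_le.
have n_gt0 : (0 < n)%N := leq_ltn_trans (leq0n k) (ltn_ord k).
pose f := centered_indicator S.
have f_ker i : D 0 i = 0 -> (f *m P ^t*) 0 i = 0.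
  move=> Di0.
  rewrite (mulmx_trC_const_row _ (fun j => spectral_kirchhoff_kernel Di0 j k)).
  by rewrite sum_centered_indicator ?mul0r.
apply: le_trans (card_le_qform1_centered_indicator n_gt0 S_le) _.
rewrite -(qform_kirchhoff_indicator S (#|S|%:R / n%:R)) -mulrA ler_wpM2l //.
exact: qform_le_spectral kirchhoff_normal _ _ spectral_kirchhoff_le_tau f_ker.
Qed.

End Laplacian.

Lemma le_div_of_le_mul (R : numFieldType) (s b t : R) :
  0 < s -> 0 <= b -> s <= 2 * b * t -> 1 / (2 * t) <= b / s.
Proof.
move=> s_gt0 b_ge0 s_le.
have bt_gt0 : 0 < 2 * b * t := lt_le_trans s_gt0 s_le.
have b_gt0 : 0 < b.
  rewrite lt_def b_ge0 andbT; apply: contraTneq bt_gt0 => ->.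
  by rewrite mulr0 mul0r ltxx.
have t_gt0 : 0 < t by move: bt_gt0; rewrite pmulr_rgt0 ?mulr_gt0.
rewrite ler_pdivlMr // mul1r mulrC ler_pdivrMr ?mulr_gt0 //.
by rewrite mulrCA mulrA.
Qed.

Lemma edge_boundary_le n (e : rel 'I_n) (S : {set 'I_n}) :
  (edge_boundary e S <= #|S| * n)%N.
Proof.
apply: (@leq_trans #|setX S [set: 'I_n]|); last by rewrite cardsX cardsT card_ord.
by apply/subset_leq_card/subsetP => p; rewrite !inE => /and3P[-> _ _].
Qed.

Lemma le_cheeger (R : numFieldType) n (e : rel 'I_n) (c : R) : (2 <= n)%N ->
    (forall S : {set 'I_n}, (0 < #|S|)%N -> (#|S| * 2 <= n)%N ->
       c <= (edge_boundary e S)%:R / #|S|%:R) ->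
  c <= ratr (cheeger e).
Proof.
move=> n_ge2 c_le; have n_gt0 : (0 < n)%N := ltnW n_ge2.
have c_le_n : c <= n%:R.
  apply: le_trans (c_le [set Ordinal n_gt0] _ _) _; rewrite ?cards1 // divr1 ler_nat.
  by have := edge_boundary_le e [set Ordinal n_gt0]; rewrite cards1 mul1n.
apply: (big_ind (fun q : rat => c <= ratr q)); first by rewrite ratr_nat.
  by move=> x y; case: leP.
by move=> S /andP[S_gt0 S_le]; rewrite fmorph_div /= !ratr_nat; apply: c_le.
Qed.

Theorem mainTheorem5 (n : nat) (e : rel 'I_n) :
  simple_graph e -> connected_graph e -> (2 <= n)%N ->
  1 / (2 * (tau e - 1)) <= ratr (cheeger e) :> algC.
Proof.
move=> [e_sym _] e_conn n_ge2; apply: le_cheeger => // S S_gt0 S_le.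
apply: le_div_of_le_mul; rewrite ?ltr0n ?ler0n //.
exact: card_le_edge_boundary_tau.
Qed.
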